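(* Let $f:\{0,1\}^n\to\{0,1\}$ be symmetric, $c\in\mathbb{R}^n_{\ge0}$ any cost vector, $\varepsilon\in(0,0.5]$ and $\beta>0$. Then the online algorithm Warmup-IPRR$(f,\varepsilon)$ with unit investment $\beta$ is an $\varepsilon$-error algorithm with expected cost at most \[ \beta n+\mathrm{opt}^{\mathrm{avg}}_0(f,c)\cdot O\!\left(\log\frac1\varepsilon\right), \] where $O(\cdot)$ hides an absolute constant.
   Context: $f$ is symmetric if $f(x)=f(y)$ whenever $\sum_ix_i=\sum_iy_i$. Online priced query model: $f$ is given; input $x$ and costs $c$ unknown; investments $\theta$ start at $0$, each step one $\theta_i$ increases by $\beta$; $x_i$ is revealed once $\theta_i\ge c_i$; cost is $\|\theta\|_1$ at halting; expected cost is over uniform $x\in\{0,1\}^n$. An algorithm is $\varepsilon$-error if $\Pr_x[\text{output}\ne f(x)]\le\varepsilon$. $\mathrm{opt}^{\mathrm{avg}}_0(f,c)$ is the infimum of expected cost over all zero-error algorithms (offline ones know $c$ and pay $c_i$ per revealed $x_i$). $\mathrm{Inf}_i[g]=\Pr_x[g(x)\ne g(x^{\oplus i})]$; for a restriction $\pi$, $f_\pi$ is the restricted function; $\mathrm{bias}(g)=\min\{\Pr_x[g\ne0],\Pr_x[g\ne1]\}$. Warmup-IPRR$(f,\varepsilon)$: start with $\theta=0,\pi=\emptyset$; while $\mathrm{bias}(f_\pi)>\varepsilon$: pick $i^*\in\arg\max_i\mathrm{Inf}_i[f_\pi]/\theta_i$, increase $\theta_{i^*}$ by $\beta$, and if $x_{i^*}$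 is revealed as $b$ add $x_{i^*}\mapsto b$ to $\pi$; output $\mathbf{1}\{\mathbb{E}_x[f_\pi(x)]\ge1/2\}$. *)

From HB Require Import structures.
From mathcomp Require Import all_boot all_order all_algebra.
From mathcomp Require Import boolp classical_sets reals exp.
Set Implicit Arguments. Unset Strict Implicit. Unset Printing Implicit Defensive.
Import Order.TTheory GRing.Theory Num.Theory.
Local Open Scope ring_scope.
Local Open Scope classical_set_scope.

Definition cube (n : nat) := {ffun 'I_n -> bool}.

Definition prob (R : realType) (n : nat) (P : pred (cube n)) : R :=
  #|[set y : cube n | P y]|%:R / (2 ^ n)%N%:R.
Definition avg (R : realType) (n : nat) (g : cube n -> R) : R :=
  (\sum_(x : cube n) g x) / (2 ^ n)%N%:R.

Definition symmetric_fn (n : nat) (f : cube n -> bool) : Prop :=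
  forall x y : cube n, (\sum_i nat_of_bool (x i) = \sum_i nat_of_bool (y i))%N -> f x = f y.

Definition restrict (n : nat) (f : cube n -> bool) (pi : {ffun 'I_n -> option bool}) : cube n -> bool :=
  fun y => f [ffun i => if pi i is Some b then b else y i].

Definition flip (n : nat) (y : cube n) (i : 'I_n) : cube n :=
  [ffun j => if j == i then ~~ y j else y j].

Definition Inf (R : realType) (n : nat) (g : cube n -> bool) (i : 'I_n) : R :=
  prob R (fun y => g y != g (flip y i)).

Definition bias (R : realType) (n : nat) (g : cube n -> bool) : R :=
  Num.min (prob R (fun y => g y != false)) (prob R (fun y => g y != true)).

(* i in argmax_j Inf_j / theta_j, with the convention a/0 = +oo for a > 0
   (stated by cross-multiplication; meaningful for theta >= 0). *)
Definition is_argmax (R : realType) (n : nat) (g : cube n -> bool)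
    (theta : {ffun 'I_n -> R}) (i : 'I_n) : Prop :=
  0 < Inf R g i /\ forall j, Inf R g j * theta i <= Inf R g i * theta j.

Record state (R : realType) (n : nat) := State {
  st_theta : {ffun 'I_n -> R};
  st_pi : {ffun 'I_n -> option bool};
  st_hist : seq 'I_n }.

Definition init_state (R : realType) (n : nat) : state R n :=
  State [ffun _ => 0] [ffun _ => None] [::].

(* tie-breaking rule: may depend only on what the algorithm has observed *)
Definition selector (R : realType) (n : nat) :=
  {ffun 'I_n -> R} -> {ffun 'I_n -> option bool} -> seq 'I_n -> option 'I_n.

Definition pick_ok (R : realType) (n : nat) (f : cube n -> bool) (eps : R)
    (pick : selector R n) : Prop :=
  forall (theta : {ffun 'I_n -> R}) (pi : {ffun 'I_n -> option bool}) (h : seq 'I_n),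
    (forall i, 0 <= theta i) -> eps < bias R (restrict f pi) ->
    exists i, pick theta pi h = Some i /\ is_argmax (restrict f pi) theta i.

Inductive iprr_step (R : realType) (n : nat) (f : cube n -> bool) (c : 'I_n -> R)
    (eps beta : R) (pick : selector R n) (x : cube n) : state R n -> state R n -> Prop :=
| IprrStep (s : state R n) (i : 'I_n) :
    eps < bias R (restrict f (st_pi s)) ->
    pick (st_theta s) (st_pi s) (st_hist s) = Some i ->
    iprr_step f c eps beta pick x s
      (State [ffun j => if j == i then st_theta s j + beta else st_theta s j]
             (if c i <= st_theta s i + beta
              then [ffun j => if j == i then Some (x i) else st_pi s j]
              else st_pi s)
             (rcons (st_hist s) i)).

Inductive iprr_reach (R : realType) (n : nat) (f : cube n -> bool) (c : 'I_n -> R)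
    (eps beta : R) (pick : selector R n) (x : cube n) : state R n -> state R n -> Prop :=
| IprrRefl s : iprr_reach f c eps beta pick x s s
| IprrTrans s1 s2 s3 : iprr_step f c eps beta pick x s1 s2 ->
    iprr_reach f c eps beta pick x s2 s3 -> iprr_reach f c eps beta pick x s1 s3.

Definition halted (R : realType) (n : nat) (f : cube n -> bool) (eps : R) (s : state R n) : Prop :=
  bias R (restrict f (st_pi s)) <= eps.

Definition iprr_output (R : realType) (n : nat) (f : cube n -> bool) (s : state R n) : bool :=
  (1 / 2 : R) <= prob R (restrict f (st_pi s)).

Definition iprr_cost (R : realType) (n : nat) (s : state R n) : R :=
  \sum_i st_theta s i.

(* offline algorithms: adaptive decision trees, paying c_i per query *)
Inductive dtree (n : nat) := Leaf of bool | Query of 'I_n & dtree n & dtree n.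

Fixpoint dt_eval (n : nat) (t : dtree n) (x : cube n) : bool :=
  match t with
  | Leaf b => b
  | Query i t0 t1 => if x i then dt_eval t1 x else dt_eval t0 x
  end.

Fixpoint dt_cost (R : realType) (n : nat) (c : 'I_n -> R) (t : dtree n) (x : cube n) : R :=
  match t with
  | Leaf _ => 0
  | Query i t0 t1 => c i + (if x i then dt_cost c t1 x else dt_cost c t0 x)
  end.

Definition opt_avg_0 (R : realType) (n : nat) (f : cube n -> bool) (c : 'I_n -> R) : R :=
  inf [set r : R | exists t : dtree n,
          (forall x, dt_eval t x = f x) /\ r = avg (dt_cost c t)].

From HB Require Import structures.
From mathcomp Require Import all_boot all_order all_algebra perm.
From mathcomp Require Import reals sequences exp.
From mathcomp Require Import ring lra zify.
Import Order.TTheory GRing.Theory Num.Theory.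
Local Open Scope ring_scope.
Set Implicit Arguments. Unset Strict Implicit. Unset Printing Implicit Defensive.

(* For a symmetric f, a coordinate fixed by the restriction pi has influence 0
   on f_pi while all free coordinates have the same influence, so Warmup-IPRR
   invests round-robin, always in a free coordinate of least investment.

   Error: the output is the majority value of f_pi, which is wrong on a
   bias(f_pi) <= eps fraction of the inputs consistent with pi; revealing a
   uniformly distributed coordinate only averages these fractions.

   Cost: fix x and the certificate Q of x read off a zero-error decision tree.
   While bias(f_pi) > eps, symmetry forces f (fill pi z) = f x as soon as z has,
   on the free coordinates U, at least as many 0s and 1s as x has on Q :&: U; a
   Chernoff bound then gives |U| <= 12 ln(1/eps) |Q :&: U|.  When the investments
   first pass level j >= 1, every free coordinate sits at level j, so each free
   certificate coordinate costs more than j beta.  Hence at most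
   12 ln(1/eps) #{i in Q | c_i > j beta} coordinates are ever invested beyond
   level j, and summing over the levels bounds the cost by
   beta n + 12 ln(1/eps) sum_(i in Q) c_i. *)

Section Cube.
Variables (R : realType) (n : nat).

Lemma card_cube : #|cube n| = (2 ^ n)%N.
Proof. by rewrite card_ffun card_bool card_ord. Qed.

Lemma cube_size_gt0 : (0 : R) < (2 ^ n)%N%:R.
Proof. by rewrite ltr0n expn_gt0. Qed.

Lemma probE (P : pred (cube n)) : prob R P = #|[set y | P y]|%:R / (2 ^ n)%N%:R.
Proof.
rewrite /prob; congr (_%:R / _); apply: eq_card => y.
by rewrite inE; apply/idP/idP => [/classical_sets.set_mem | ?]; last exact: classical_sets.mem_set.
Qed.

Lemma natr_card_sum (T : finType) (A : {set T}) :
  #|A|%:R = \sum_(z : T) (if z \in A then 1 else 0 : R).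
Proof. by rewrite -big_mkcond /= sumr_const. Qed.

Definition fill (pi : {ffun 'I_n -> option bool}) (z : cube n) : cube n :=
  [ffun i => if pi i is Some b then b else z i].

Lemma restrictE (f : cube n -> bool) pi z : restrict f pi z = f (fill pi z).
Proof. by []. Qed.

Definition free (pi : {ffun 'I_n -> option bool}) : {set 'I_n} := [set i | pi i == None].

Lemma in_free (pi : {ffun 'I_n -> option bool}) i : (i \in free pi) = (pi i == None).
Proof. by rewrite inE. Qed.

Lemma flipK i : involutive (fun z : cube n => flip z i).
Proof. by move=> z; apply/ffunP => j; rewrite !ffunE; case: eqP => // _; rewrite negbK. Qed.

Lemma flip_at (z : cube n) i : flip z i i = ~~ z i.
Proof. by rewrite ffunE eqxx. Qed.

Lemma fill_flip (pi : {ffun 'I_n -> option bool}) (z : cube n) i :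
  pi i != None -> fill pi (flip z i) = fill pi z.
Proof.
move=> Hi; apply/ffunP => j; rewrite !ffunE.
by case: eqP => [->|_]; case: (pi _) Hi.
Qed.

Lemma fill_reveal (pi : {ffun 'I_n -> option bool}) (z : cube n) i : pi i = None ->
  fill pi z = fill [ffun j => if j == i then Some (z i) else pi j] z.
Proof. by move=> free_i; apply/ffunP => j; rewrite !ffunE; case: eqP => [->|]; rewrite ?free_i. Qed.

Definition cube_perm (s : {perm 'I_n}) (y : cube n) : cube n := [ffun k => y (s k)].

Lemma cube_perm_inj s : injective (cube_perm s).
Proof.
move=> y1 y2 /ffunP H; apply/ffunP => k.
by have := H (s^-1 k)%g; rewrite !ffunE permKV.
Qed.

Lemma fill_perm (pi : {ffun 'I_n -> option bool}) (s : {perm 'I_n}) z :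
  (forall k, pi (s k) = pi k) ->
  fill pi (cube_perm s z) = cube_perm s (fill pi z).
Proof. by move=> pi_s; apply/ffunP => k; rewrite !ffunE pi_s. Qed.

Lemma symmetric_fn_perm (f : cube n -> bool) s y :
  symmetric_fn f -> f (cube_perm s y) = f y.
Proof.
move=> fsym; apply: fsym; rewrite [in RHS](reindex_inj (@perm_inj _ s)) /=.
by apply: eq_bigr => i _; rewrite ffunE.
Qed.

End Cube.

Section RestrictedInfluence.
Variables (R : realType) (n : nat) (f : cube n -> bool).
Variable pi : {ffun 'I_n -> option bool}.

Lemma Inf_restrict_fixed i b : pi i = Some b -> Inf R (restrict f pi) i = 0.
Proof.
move=> Hi; rewrite /Inf probE; apply/eqP; rewrite mulf_eq0 pnatr_eq0 cards_eq0.
apply/orP; left; apply/eqP/setP => y; rewrite !inE !restrictE.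
by rewrite fill_flip ?Hi // eqxx.
Qed.

Hypothesis fsym : symmetric_fn f.

Lemma Inf_restrict_free i j : pi i = None -> pi j = None ->
  Inf R (restrict f pi) i = Inf R (restrict f pi) j.
Proof.
move=> Hi Hj; rewrite /Inf !probE; congr (_%:R / _).
set t := tperm i j.
have pi_t k : pi (t k) = pi k by rewrite /t; case: tpermP => [->|->|]; rewrite ?Hi ?Hj.
have restrict_t y : restrict f pi (cube_perm t y) = restrict f pi y.
  by rewrite !restrictE fill_perm // symmetric_fn_perm.
have flip_t y : flip (cube_perm t y) i = cube_perm t (flip y j).
  apply/ffunP => k; rewrite !ffunE.
  by rewrite -{1}(tpermL i j) -/t (inj_eq (@perm_inj _ t)).
rewrite -(card_preimset _ (@cube_perm_inj _ t)); apply: eq_card => y.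
by rewrite !inE flip_t !restrict_t.
Qed.

Lemma argmax_restrict_free (theta : {ffun 'I_n -> R}) i :
  is_argmax (restrict f pi) theta i ->
  pi i = None /\ forall j, pi j = None -> theta i <= theta j.
Proof.
case=> Inf_i_gt0 Hmax.
have Ni : pi i = None.
  case E: (pi i) Inf_i_gt0 => [b|//]; by rewrite (Inf_restrict_fixed E) ltxx.
split=> // j Nj; have := Hmax j.
by rewrite (Inf_restrict_free Nj Ni) ler_pM2l.
Qed.

End RestrictedInfluence.

Section CountingBound.
Variables (R : realType) (n : nat).

Definition count_in (U : {set 'I_n}) (z : cube n) (b : bool) : nat :=
  #|[set i in U | z i == b]|.

Lemma count_in_perm (U : {set 'I_n}) (s : {perm 'I_n}) z b : (forall k, (s k \in U) = (k \in U)) ->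
  count_in U (cube_perm s z) b = count_in U z b.
Proof.
move=> U_s; rewrite /count_in -[in RHS](card_preimset _ (@perm_inj _ s)).
by apply: eq_card => k; rewrite !inE ffunE U_s.
Qed.

Lemma sum_half_pow_count U b :
  \sum_(z : cube n) (1/2 : R) ^+ count_in U z b = (3/2) ^+ #|U| * 2 ^+ #|~: U|.
Proof.
pose F i (bb : bool) : R := if (i \in U) && (bb == b) then 1/2 else 1.
have prodF z : (1/2 : R) ^+ count_in U z b = \prod_i F i (z i).
  rewrite /count_in -prodr_const big_mkcond /=.
  by apply: eq_bigr => i _; rewrite /F inE.
under eq_bigr do rewrite prodF.
rewrite -(bigA_distr_bigA F) /=.
have sumF i : \sum_(bb : bool) F i bb = if i \in U then 3/2 else 2.
  by rewrite big_bool /F; case: (i \in U) => //=; case: (b) => /=; field.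
under eq_bigr do rewrite sumF.
rewrite (bigID (mem U)) /=.
under eq_bigr => i Hi do rewrite Hi.
under [X in _ * X]eq_bigr => i Hi do rewrite (negbTE Hi).
rewrite !prodr_const; congr (_ * _ ^+ _).
by apply: eq_card => i; rewrite !inE.
Qed.

(* Markov's inequality for 2 ^ (d - count_in U z b), whose mean factorises
   over the coordinates. *)
Lemma card_count_lt (U : {set 'I_n}) b d :
  (#|[set z : cube n | (count_in U z b < d)%N]|%:R : R) <=
    2 ^+ d * (3/4) ^+ #|U| * (2 ^ n)%N%:R.
Proof.
have indicator_le z : (if z \in [set z | (count_in U z b < d)%N] then 1 else 0 : R)
    <= 2 ^+ d * (1/2) ^+ count_in U z b.
  rewrite inE; case: ltnP => [lt_cd|_]; last by rewrite mulr_ge0 ?exprn_ge0 ?divr_ge0.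
  rewrite -(subnK (ltnW lt_cd)) exprD -mulrA -exprMn div1r divff ?pnatr_eq0 //.
  by rewrite expr1n mulr1 exprn_ege1 // ler1n.
rewrite natr_card_sum; apply: (le_trans (ler_sum _ (fun z _ => indicator_le z))).
rewrite -mulr_sumr sum_half_pow_count -mulrA ler_pM2l ?exprn_gt0 //.
have -> : (2 ^ n)%N%:R = (2 : R) ^+ #|U| * 2 ^+ #|~: U|.
  by rewrite -exprD cardsC card_ord natrX.
rewrite mulrA -exprMn.
by rewrite (_ : 3 / 4 * 2 = 3 / 2 :> R) //; field.
Qed.

End CountingBound.

Lemma ln_inv_ge0 (R : realType) (eps : R) : 0 < eps -> eps <= 1 -> 0 <= ln (1/eps).
Proof. by move=> eps_gt0 eps_le1; rewrite ln_ge0 // ler_pdivlMr // mul1r. Qed.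

Lemma le_ln_inv_of_lt_tail (R : realType) (eps : R) (d m : nat) :
  0 < eps -> eps <= 1/2 -> (1 <= d)%N ->
  eps < 2 * 2 ^+ d * (3/4) ^+ m -> m%:R <= 12 * ln (1/eps) * d%:R.
Proof.
move=> eps_gt0 eps_le d_ge1 eps_lt.
set L := ln (1/eps).
have expL : expR L = 1/eps by rewrite /L lnK // posrE divr_gt0.
have L_ge0 : 0 <= L by apply: ln_inv_ge0 => //; lra.
have three_quarters : (3/4 : R) <= expR (-1/4) by have := expR_ge1Dx (-1/4 : R); lra.
have two_le : (2 : R) <= expR L by rewrite expL ler_pdivlMr //; lra.
have : expR (- L) < expR (L + d%:R * L + m%:R * (-1/4)).
  rewrite expRN expL invf_div divr1 (lt_le_trans eps_lt) //.
  rewrite !expRD !expRM_natl.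
  apply: ler_pM; [by rewrite mulr_ge0 // exprn_ge0 | by rewrite exprn_ge0 //; lra | |].
  - by apply: ler_pM; rewrite ?exprn_ge0 //; apply: lerXn2r; rewrite ?nnegrE // ltW ?expR_gt0.
  - by apply: lerXn2r; rewrite ?nnegrE //; lra.
rewrite ltr_expR => ineq.
have : (1 : R) <= d%:R by rewrite ler1n.
nra.
Qed.

Section CertificateCovering.
Variables (R : realType) (n : nat) (f : cube n -> bool).
Hypothesis fsym : symmetric_fn f.
Variables (pi : {ffun 'I_n -> option bool}) (x : cube n) (Q : {set 'I_n}).
Hypothesis pi_x : forall i b, pi i = Some b -> x i = b.
Hypothesis Q_cert : forall y : cube n, (forall i, i \in Q -> y i = x i) -> f y = f x.

Let U := free pi.
Let QU := Q :&: U.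

Definition disagreements (z : cube n) : {set 'I_n} := [set i in QU | z i != x i].

Lemma in_disagreements z i : (i \in disagreements z) = [&& i \in Q, i \in U & z i != x i].
Proof. by rewrite !inE andbA. Qed.

Let counts_dominate z := forall b, (count_in QU x b <= count_in U z b)%N.

Lemma fill_certificate z : disagreements z = set0 -> f (fill pi z) = f x.
Proof.
move=> no_dis; apply: Q_cert => i iQ; rewrite ffunE.
case E: (pi i) => [b|]; first by rewrite (pi_x E).
apply/eqP; apply: contraT => z_neq.
have : i \in disagreements z by rewrite in_disagreements iQ z_neq in_free E.
by rewrite no_dis inE.
Qed.

Lemma swap_partner z i : counts_dominate z -> i \in disagreements z ->
  exists2 j, j \in U & z j = ~~ z i /\ (j \notin Q) || (x j == z i).
Proof.
move=> dom; rewrite in_disagreements => /and3P[iQ iU z_neq].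
have x_i : x i = ~~ z i by move: z_neq; case: (z i); case: (x i).
case: (boolP [exists j, [&& j \in U, z j == ~~ z i & (j \notin Q) || (x j == z i)]]).
  by case/existsP => j /and3P[jU /eqP z_j Q_j]; exists j.
rewrite negb_exists => /forallP no_partner.
have sub : [set l in U | z l == ~~ z i] \subset [set l in QU | x l == ~~ z i] :\ i.
  apply/subsetP => l; rewrite !inE => /andP[lU z_l].
  have := no_partner l; rewrite in_free lU z_l /= negb_or negbK => /andP[-> x_l] /=.
  apply/andP; split.
    by apply: contraTneq z_l => ->; case: (z i).
  by move: x_l; case: (x l); case: (z i).
have i_in : i \in [set l in QU | x l == ~~ z i] by rewrite !inE iQ -in_free iU x_i eqxx.
have := dom (~~ z i); have := subset_leq_card sub.
rewrite /count_in (cardsD1 i [set l in QU | x l == ~~ z i]) i_in; lia.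
Qed.

(* Swapping a disagreement with its partner permutes free coordinates, so it
   preserves f (fill pi z) by symmetry, as well as the counts. *)
Lemma certificate_of_counts z : counts_dominate z -> f (fill pi z) = f x.
Proof.
move: {2}#|disagreements z| (leqnn #|disagreements z|) => k.
elim: k z => [|k IH] z dis_le dom.
  by apply: fill_certificate; apply/eqP; rewrite -cards_eq0 -leqn0.
have [no_dis|[i dis_i]] := set_0Vmem (disagreements z); first exact: fill_certificate.
have [j jU [z_j Q_j]] := swap_partner dom dis_i.
move: (dis_i); rewrite in_disagreements => /and3P[iQ iU z_neq].
set t := tperm i j.
have pi_t l : pi (t l) = pi l.
  move: iU jU; rewrite !in_free /t => /eqP pi_i /eqP pi_j.
  by case: tpermP => [->|->|]; rewrite ?pi_i ?pi_j.
have U_t l : (t l \in U) = (l \in U) by rewrite !in_free pi_t.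
rewrite -(symmetric_fn_perm t _ fsym) -fill_perm //; apply: IH; last first.
  by move=> b; rewrite count_in_perm.
suff sub : disagreements (cube_perm t z) \subset disagreements z :\ i.
  by move: (subset_leq_card sub) dis_le; rewrite (cardsD1 i (disagreements z)) dis_i; lia.
apply/subsetP => l; rewrite !inE ffunE => /andP[/andP[lQ lU] z_l].
have [l_i|l_i] := eqVneq l i.
  by move: z_l z_neq; rewrite l_i /t tpermL z_j; case: (z i); case: (x i).
have [l_j|l_j] := eqVneq l j.
  move: z_l; rewrite l_j /t tpermR => z_i_neq; rewrite l_j in lQ.
  by rewrite lQ /= eq_sym in Q_j; rewrite Q_j in z_i_neq.
by move: z_l; rewrite /t tpermD 1?eq_sym // => ->; rewrite lQ lU.
Qed.

Lemma bias_restrict_le :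
  bias R (restrict f pi) * (2 ^ n)%N%:R <=
  (#|[set z : cube n | (count_in U z true < count_in QU x true)%N]| +
   #|[set z : cube n | (count_in U z false < count_in QU x false)%N]|)%N%:R.
Proof.
have bias_le : bias R (restrict f pi) <= prob R (fun y => restrict f pi y != f x).
  by rewrite /bias; case: (f x); rewrite ge_min lexx ?orbT.
apply: (le_trans (ler_wpM2r (ler0n _ _) bias_le)).
rewrite probE mulfVK ?pnatr_eq0 ?expn_eq0 // ler_nat.
set lt_t := [set z | _ < _]%N; set lt_f := [set z | _ < _]%N.
apply: (@leq_trans #|lt_t :|: lt_f|); last by rewrite cardsU leq_subr.
apply: subset_leq_card; apply/subsetP => z; rewrite !inE restrictE => f_neq.
apply: contraT; rewrite negb_or -!leqNgt => /andP[le_t le_f].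
by rewrite certificate_of_counts ?eqxx // in f_neq; case.
Qed.

Lemma card_free_le_certificate (eps : R) :
  0 < eps -> eps <= 1/2 -> eps < bias R (restrict f pi) ->
  #|U|%:R <= 12 * ln (1/eps) * #|QU|%:R.
Proof.
move=> eps_gt0 eps_le eps_lt.
have count_le b : (count_in QU x b <= #|QU|)%N.
  by apply/subset_leq_card/subsetP => i; rewrite inE => /andP[].
have tail b : (#|[set z : cube n | (count_in U z b < count_in QU x b)%N]|%:R : R) <=
    2 ^+ #|QU| * (3/4) ^+ #|U| * (2 ^ n)%N%:R.
  apply: le_trans (card_count_lt _ _ _ _); rewrite ler_nat subset_leq_card //.
  by apply/subsetP => z; rewrite !inE => /leq_trans; apply.
have QU_gt0 : (0 < #|QU|)%N.
  rewrite lt0n; apply/eqP => QU0.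
  have no_tail b : [set z : cube n | (count_in U z b < count_in QU x b)%N] = set0.
    by apply/setP => z; rewrite !inE ltnNge (leq_trans (count_le b)) ?QU0.
  have := bias_restrict_le; rewrite !no_tail cards0 leNgt => /negP; apply.
  by rewrite mulr_gt0 ?cube_size_gt0 ?(lt_trans eps_gt0).
apply: le_ln_inv_of_lt_tail => //.
rewrite -(ltr_pM2r (cube_size_gt0 R n)).
apply: (lt_le_trans _ (le_trans bias_restrict_le _)); first by rewrite ltr_pM2r ?cube_size_gt0.
by have := lerD (tail true) (tail false); rewrite natrD; lra.
Qed.

End CertificateCovering.

Section DecisionTrees.
Variables (R : realType) (n : nat) (f : cube n -> bool) (c : 'I_n -> R).
Hypothesis c_ge0 : forall i, 0 <= c i.

Lemma dtree_certificate (t : dtree n) (x : cube n) : exists Q : {set 'I_n},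
  \sum_(i in Q) c i <= dt_cost c t x /\
  forall y : cube n, (forall i, i \in Q -> y i = x i) -> dt_eval t y = dt_eval t x.
Proof.
elim: t => [b|i t0 IH0 t1 IH1]; first by exists set0; rewrite big_set0.
have [Q [cost_Q cert_Q]] : exists Q : {set 'I_n},
  \sum_(i in Q) c i <= (if x i then dt_cost c t1 x else dt_cost c t0 x) /\
  forall y : cube n, (forall i, i \in Q -> y i = x i) ->
    (if x i then dt_eval t1 y else dt_eval t0 y) = (if x i then dt_eval t1 x else dt_eval t0 x).
  by case: (x i); [apply: IH1 | apply: IH0].
exists (i |: Q); split=> [/=|y agree /=].
  case: (boolP (i \in Q)) => iQ; last by rewrite big_setU1 //= lerD2l.
  by rewrite (setUidPr _) ?sub1set // (le_trans cost_Q) ?lerDr.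
by rewrite (agree i) ?setU11 //; apply: cert_Q => j jQ; rewrite agree ?setU1r.
Qed.

Definition set_coord (y : cube n) (i : 'I_n) (b : bool) : cube n :=
  [ffun j => if j == i then b else y j].

Fixpoint query_all (l : seq 'I_n) (y : cube n) : dtree n :=
  match l with
  | [::] => Leaf n (f y)
  | i :: l' => Query i (query_all l' (set_coord y i false)) (query_all l' (set_coord y i true))
  end.

Lemma query_all_eval l (y x : cube n) : (forall j, j \notin l -> y j = x j) ->
  dt_eval (query_all l y) x = f x.
Proof.
elim: l y => [|i l IH] y agree /=.
  by congr f; apply/ffunP => j; apply: agree.
case x_i: (x i); apply: IH => j j_l; rewrite ffunE;
  (case: eqP => [->|/eqP j_i]; first by rewrite x_i);
  by apply: agree; rewrite inE negb_or j_i.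
Qed.

Lemma le_opt_avg_0 (a A K : R) : 0 < K ->
  (forall t : dtree n, (forall x, dt_eval t x = f x) -> a <= A + avg (dt_cost c t) * K) ->
  a <= A + opt_avg_0 f c * K.
Proof.
move=> K_gt0 le_trees.
set t0 := query_all (enum 'I_n) [ffun=> false].
have t0_eval x : dt_eval t0 x = f x by apply: query_all_eval => j; rewrite mem_enum.
rewrite -lerBlDl -ler_pdivrMr //; apply: lb_le_inf; first by exists (avg (dt_cost c t0)), t0.
by move=> r [t [t_eval ->]]; rewrite ler_pdivrMr // lerBlDl le_trees.
Qed.

End DecisionTrees.

Section Run.
Variables (R : realType) (n : nat) (f : cube n -> bool) (c : 'I_n -> R)
  (eps beta : R) (pick : selector R n).
Hypotheses (fsym : symmetric_fn f) (c_ge0 : forall i, 0 <= c i) (beta_gt0 : 0 < beta)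
  (pickP : pick_ok f eps pick).

Definition invest (x : cube n) (s : state R n) (i : 'I_n) : state R n :=
  State [ffun j => if j == i then st_theta s j + beta else st_theta s j]
        (if c i <= st_theta s i + beta
         then [ffun j => if j == i then Some (x i) else st_pi s j] else st_pi s)
        (rcons (st_hist s) i).

Definition iprr_next (x : cube n) (s : state R n) : state R n :=
  if eps < bias R (restrict f (st_pi s)) then
    if pick (st_theta s) (st_pi s) (st_hist s) is Some i then invest x s i else s
  else s.

Fixpoint iprr_run (k : nat) (x : cube n) (s : state R n) : state R n :=
  if k is k'.+1 then iprr_run k' x (iprr_next x s) else s.

Lemma iprr_next_halted x s : halted f eps s -> iprr_next x s = s.
Proof. by rewrite /iprr_next /halted ltNge => ->. Qed.

Lemma iprr_run_halted k x s : halted f eps s -> iprr_run k x s = s.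
Proof. by move=> hs; elim: k => //= k; rewrite iprr_next_halted. Qed.

Lemma iprr_next_invest s : (forall i, 0 <= st_theta s i) ->
  eps < bias R (restrict f (st_pi s)) ->
  exists i, [/\ st_pi s i = None,
     (forall j, st_pi s j = None -> st_theta s i <= st_theta s j),
     pick (st_theta s) (st_pi s) (st_hist s) = Some i &
     forall x, iprr_next x s = invest x s i].
Proof.
move=> theta_ge0 eps_lt.
have [i [pick_i /(argmax_restrict_free fsym) [free_i min_i]]] := pickP (st_hist s) theta_ge0 eps_lt.
by exists i; split=> // x; rewrite /iprr_next eps_lt pick_i.
Qed.

Definition iprr_inv (x : cube n) (s : state R n) (tv : 'I_n -> nat) : Prop :=
  [/\ forall i, st_theta s i = (tv i)%:R * beta,
      forall i, st_pi s i = None -> (0 < tv i)%N -> st_theta s i < c i &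
      forall i b, st_pi s i = Some b -> x i = b].

Definition tv_incr (tv : 'I_n -> nat) (i : 'I_n) : 'I_n -> nat :=
  fun j => (tv j + (j == i))%N.

Lemma iprr_inv_init x : iprr_inv x (init_state R n) (fun _ => 0%N).
Proof. by split=> [i|//|i b]; rewrite /= ffunE ?mul0r. Qed.

Lemma iprr_inv_theta_ge0 x s tv : iprr_inv x s tv -> forall i, 0 <= st_theta s i.
Proof. by case=> theta_tv _ _ i; rewrite theta_tv mulr_ge0 // ltW. Qed.

Lemma iprr_inv_invest x s tv i :
  iprr_inv x s tv -> iprr_inv x (invest x s i) (tv_incr tv i).
Proof.
case=> theta_tv below_c pi_x; split=> /= [j|j|j b].
- rewrite !ffunE theta_tv /tv_incr; case: eqP => _ /=; last by rewrite addn0.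
  by rewrite natrD mulrDl mul1r.
- rewrite ffunE /tv_incr; case: ifP => [_|/negbT]; first rewrite ffunE.
    by case: eqP => //= _; rewrite addn0; apply: below_c.
  by rewrite -ltNge => lt_c; case: eqP => [-> //|_]; rewrite addn0; apply: below_c.
- case: ifP => _; last exact: pi_x.
  by rewrite ffunE; case: eqP => [-> [] //|_]; apply: pi_x.
Qed.

Lemma iprr_inv_next x s tv : iprr_inv x s tv -> eps < bias R (restrict f (st_pi s)) ->
  exists i, [/\ st_pi s i = None, (forall j, st_pi s j = None -> (tv i <= tv j)%N),
     pick (st_theta s) (st_pi s) (st_hist s) = Some i,
     iprr_next x s = invest x s i & iprr_inv x (invest x s i) (tv_incr tv i)].
Proof.
move=> inv eps_lt.
have [i [free_i min_i pick_i next_i]] := iprr_next_invest (iprr_inv_theta_ge0 inv) eps_lt.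
exists i; split=> //; last exact: iprr_inv_invest.
move=> j /min_i; case: inv => theta_tv _ _.
by rewrite !theta_tv ler_pM2r // ler_nat.
Qed.

Lemma iprr_run_reach k x s tv : iprr_inv x s tv ->
  iprr_reach f c eps beta pick x s (iprr_run k x s).
Proof.
elim: k s tv => [|k IH] s tv inv; first exact: IprrRefl.
have [hs|eps_lt] := leP (bias R (restrict f (st_pi s))) eps.
  by rewrite iprr_run_halted //; exact: IprrRefl.
have [i [_ _ pick_i next_i inv']] := iprr_inv_next inv eps_lt.
by rewrite /= next_i; apply: IprrTrans (IH _ _ inv'); apply: IprrStep.
Qed.

Section Termination.
Variable M : nat.
Hypothesis c_lt_M : forall i, c i < M%:R * beta.

Definition budget_left (s : state R n) (tv : 'I_n -> nat) : nat :=
  \sum_i (if st_pi s i == None then M - tv i else 0)%N.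

Lemma iprr_inv_tv_lt x s tv i : iprr_inv x s tv -> st_pi s i = None -> (tv i < M)%N.
Proof.
case=> theta_tv below_c _ free_i; have := c_lt_M i.
have [tv_i0|tv_i_gt0] := posnP (tv i).
  rewrite tv_i0 lt0n; apply: contraTneq => ->; rewrite mul0r -leNgt; exact: c_ge0.
move=> /(lt_trans (below_c i free_i tv_i_gt0)).
by rewrite theta_tv ltr_pM2r // ltr_nat.
Qed.

Lemma budget_left_invest x s tv i : iprr_inv x s tv -> st_pi s i = None ->
  (budget_left (invest x s i) (tv_incr tv i) < budget_left s tv)%N.
Proof.
move=> inv free_i; have tv_lt := iprr_inv_tv_lt inv free_i.
rewrite /budget_left (bigD1 i) //= [X in (_ < X)%N](bigD1 i) //= free_i eqxx.
rewrite -addSn; apply: leq_add.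
  by rewrite /tv_incr eqxx /=; case: ifP => _; lia.
apply: leq_sum => j /negbTE j_i; rewrite /tv_incr j_i addn0 /=.
by case: (c i <= _)%R; rewrite ?ffunE ?j_i.
Qed.

Lemma iprr_run_halts k x s tv : iprr_inv x s tv -> (budget_left s tv <= k)%N ->
  halted f eps (iprr_run k x s).
Proof.
elim: k s tv => [|k IH] s tv inv budget_le /=.
  rewrite /halted leNgt; apply/negP => eps_lt.
  have [i [free_i _ _ _ _]] := iprr_inv_next inv eps_lt.
  by have := budget_left_invest inv free_i; rewrite leqn0 in budget_le; rewrite (eqP budget_le).
have [hs|eps_lt] := leP (bias R (restrict f (st_pi s))) eps.
  by rewrite iprr_run_halted ?iprr_next_halted.
have [i [free_i _ _ next_i inv']] := iprr_inv_next inv eps_lt.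
rewrite next_i; apply: IH inv' _.
by have := budget_left_invest inv free_i; lia.
Qed.

End Termination.
End Run.

Section MajorityError.
Variables (R : realType) (n : nat).

Lemma sum_flip_invariant (Phi : cube n -> R) i b : (forall z, Phi (flip z i) = Phi z) ->
  \sum_(z : cube n | z i == b) Phi z = (\sum_z Phi z) / 2.
Proof.
move=> Phi_flip.
have flip_inj : injective (fun z : cube n => flip z i) by apply: can_inj (flipK i).
have halves : \sum_(z : cube n | z i != b) Phi z = \sum_(z : cube n | z i == b) Phi z.
  rewrite (reindex_inj flip_inj) /=.
  by apply: eq_big => z; rewrite ?flip_at ?Phi_flip //; case: (z i); case: b.
by rewrite [in RHS](bigID (fun z : cube n => z i == b)) /= halves; field.
Qed.

Lemma sum_split_coord (G : bool -> cube n -> R) i :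
  (forall b z, G b (flip z i) = G b z) ->
  \sum_(z : cube n) G (z i) z = (\sum_z G true z + \sum_z G false z) / 2.
Proof.
move=> G_flip.
have part b : \sum_(z : cube n | z i == b) G (z i) z = (\sum_z G b z) / 2.
  by rewrite -(sum_flip_invariant b (G_flip b)); apply: eq_bigr => z /eqP ->.
rewrite (bigID (fun z : cube n => z i == true)) /= part mulrDl; congr (_ + _).
by rewrite -part; apply: eq_bigl => z; case: (z i).
Qed.

Lemma majority_error_le_bias (g : cube n -> bool) :
  \sum_(z : cube n) (if ((1/2 : R) <= prob R g) != g z then 1 else 0)
    <= bias R g * (2 ^ n)%N%:R.
Proof.
set N := (2 ^ n)%N%:R; have N_gt0 : (0 : R) < N := cube_size_gt0 R n.
set a : R := #|[set y | g y]|%:R; set b : R := #|[set y | ~~ g y]|%:R.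
have ab : a + b = N.
  rewrite /a /b -natrD /N -card_cube -(cardsC [set y | g y]); congr (_ + _)%:R.
  by apply: eq_card => y; rewrite !inE.
have prob_g : prob R g = a / N by rewrite probE.
have bias_ab : bias R g = Num.min (a / N) (b / N).
  by rewrite /bias !probE; congr (Num.min (_%:R / _) (_%:R / _)); apply: eq_card => y;
    rewrite !inE; case: (g y).
have errors o : \sum_(z : cube n) (if o != g z then 1 else 0 : R) = if o then b else a.
  transitivity (#|[set z | o != g z]|%:R : R).
    by rewrite natr_card_sum; apply: eq_bigr => z _; rewrite inE.
  by case: o; congr _%:R; apply: eq_card => y; rewrite !inE; case: (g y).
rewrite errors prob_g bias_ab -ler_pdivrMr // le_min !ler_pM2r ?invr_gt0 //.
have [maj|maj] := leP (1/2) (a / N); rewrite lexx ?andbT /=; move: maj.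
  by rewrite ler_pdivlMr //; lra.
by rewrite ltr_pdivrMr //; lra.
Qed.

End MajorityError.

Section Error.
Variables (R : realType) (n : nat) (f : cube n -> bool) (c : 'I_n -> R)
  (eps beta : R) (pick : selector R n).
Hypotheses (fsym : symmetric_fn f) (eps_gt0 : 0 < eps) (beta_gt0 : 0 < beta)
  (pickP : pick_ok f eps pick).

Let run := iprr_run f c eps beta pick.

Definition run_error (k : nat) (s : state R n) (y : cube n) : R :=
  if (bias R (restrict f (st_pi (run k y s))) <= eps) && (iprr_output f (run k y s) != f y)
  then 1 else 0.

Lemma sum_run_error_halted k s : halted f eps s ->
  \sum_z run_error k s (fill (st_pi s) z) <= eps * (2 ^ n)%N%:R.
Proof.
move=> hs; apply: (le_trans _ (ler_wpM2r (ltW (cube_size_gt0 R n)) hs)).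
apply: (le_trans _ (majority_error_le_bias R _)).
apply: ler_sum => z _.
by rewrite /run_error /run iprr_run_halted //= hs.
Qed.

Lemma sum_run_error k s : (forall i, 0 <= st_theta s i) ->
  \sum_z run_error k s (fill (st_pi s) z) <= eps * (2 ^ n)%N%:R.
Proof.
elim: k s => [|k IH] s theta_ge0;
  have [hs|eps_lt] := leP (bias R (restrict f (st_pi s))) eps;
  try exact: sum_run_error_halted.
  by rewrite big1 ?mulr_ge0 ?ler0n ?ltW // => z _; rewrite /run_error /= leNgt eps_lt.
(* The invested coordinate i does not depend on the input; when it is revealed,
   the sum splits according to the uniformly distributed value z i. *)
have [i [free_i _ _ next_i]] := iprr_next_invest c beta fsym pickP theta_ge0 eps_lt.
pose S b := invest c beta [ffun=> b] s i.
have run_S y : run_error k.+1 s y = run_error k (S (y i)) y.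
  by rewrite /run_error /run /= next_i /S /invest ffunE.
have theta_S b j : 0 <= st_theta (S b) j.
  by rewrite /S /= ffunE; case: eqP => _; rewrite ?addr_ge0 ?theta_ge0 ?ltW.
under eq_bigr do rewrite run_S.
have [revealed|hidden] := boolP (c i <= st_theta s i + beta); last first.
  have S_const b : S b = S false by rewrite /S /invest (negbTE hidden).
  under eq_bigr do rewrite S_const.
  by have := IH _ (theta_S false); rewrite /= (negbTE hidden).
have pi_S b : st_pi (S b) = [ffun j => if j == i then Some b else st_pi s j].
  by apply/ffunP => j; rewrite /= revealed !ffunE.
rewrite (eq_bigr (fun z : cube n => run_error k (S (z i)) (fill (st_pi (S (z i))) z))); last first.
  by move=> z _; rewrite pi_S ffunE free_i -fill_reveal.
rewrite (sum_split_coord (G := fun b z => run_error k (S b) (fill (st_pi (S b)) z))) => [|b z].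
  by have := IH _ (theta_S true); have := IH _ (theta_S false); lra.
by rewrite fill_flip // pi_S ffunE eqxx.
Qed.

End Error.

Lemma card_set_indicator (T : finType) (P : pred T) :
  #|[set i | P i]| = (\sum_i nat_of_bool (P i))%N.
Proof. by rewrite -sum1dep_card big_mkcond. Qed.

Lemma sum_layers (I : finType) (tv : I -> nat) T : (forall i, tv i <= T)%N ->
  (\sum_i tv i = \sum_(j < T) #|[set i | j < tv i]|)%N.
Proof.
move=> tv_le; under [RHS]eq_bigr do rewrite card_set_indicator.
rewrite exchange_big /=; apply: eq_bigr => i _.
have count_lt t J : (\sum_(j < J) nat_of_bool (j < t) = minn t J)%N.
  elim: J => [|J IH]; first by rewrite big_ord0 minn0.
  by rewrite big_ord_recr /= IH; case: ltnP => ?; lia.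
by rewrite count_lt; apply/esym/minn_idPl.
Qed.

Lemma sum_threshold_le (R : realType) (beta cc : R) T : 0 < beta -> 0 <= cc ->
  \sum_(j < T) beta * (if j.+1%:R * beta < cc then 1 else 0) <= cc.
Proof.
move=> beta_gt0 cc_ge0; elim: T => [|T IH]; first by rewrite big_ord0.
rewrite big_ord_recr /=; case: ifP => [lt_cc|_]; last by rewrite mulr0 addr0.
have : \sum_(j < T) beta * (if j.+1%:R * beta < cc then 1 else 0) <= T%:R * beta.
  rewrite -[T in T%:R]card_ord mulr_natl -sumr_const; apply: ler_sum => j _.
  by case: ifP => _; rewrite ?mulr1 ?mulr0 // ltW.
by move: lt_cc; rewrite -addn1 natrD; lra.
Qed.

Section Cost.
Variables (R : realType) (n : nat) (f : cube n -> bool) (c : 'I_n -> R)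
  (eps beta : R) (pick : selector R n).
Hypotheses (fsym : symmetric_fn f) (c_ge0 : forall i, 0 <= c i) (eps_gt0 : 0 < eps)
  (eps_le : eps <= 1/2) (beta_gt0 : 0 < beta) (pickP : pick_ok f eps pick).
Variables (x : cube n) (Q : {set 'I_n}).
Hypothesis Q_cert : forall y : cube n, (forall i, i \in Q -> y i = x i) -> f y = f x.

Let L_ge0 : 0 <= ln (1/eps).
Proof.
by apply: ln_inv_ge0 => //; apply: le_trans eps_le _; rewrite ler_pdivrMr // mul1r ler1n.
Qed.

Definition level_load (s : state R n) (tv : 'I_n -> nat) (j : nat) : nat :=
  (#|[set i | j < tv i]| + #|[set i | (st_pi s i == None) && (tv i <= j)]|)%N.

Definition expensive (j : nat) : nat := #|[set i in Q | j%:R * beta < c i]|.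

Definition cost_inv (s : state R n) (tv : 'I_n -> nat) : Prop :=
  iprr_inv c beta x s tv /\ forall j, (0 < j)%N -> (exists i, (j < tv i)%N) ->
    (level_load s tv j)%:R <= 12 * ln (1/eps) * (expensive j)%:R.

Lemma level_load_invest s tv i j : st_pi s i = None ->
  (level_load (invest c beta x s i) (tv_incr tv i) j <= level_load s tv j)%N.
Proof.
move=> free_i; rewrite /level_load !card_set_indicator -!big_split /=.
apply: leq_sum => l _; rewrite /tv_incr.
have [->|l_i] := eqVneq l i.
  rewrite free_i eqxx /= addn1 ltnS.
  by case: (_ == None); case: (leqP j (tv i)) => ?; case: (ltnP j (tv i)) => ? //=; lia.
rewrite addn0.
by case: (c i <= _)%R; rewrite ?ffunE ?(negbTE l_i).
Qed.

Lemma level_load_le_expensive s tv j : iprr_inv c beta x s tv ->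
  eps < bias R (restrict f (st_pi s)) -> (0 < j)%N ->
  (forall l, st_pi s l = None -> j <= tv l)%N -> (forall l, tv l <= j)%N ->
  (level_load s tv j)%:R <= 12 * ln (1/eps) * (expensive j)%:R.
Proof.
case=> theta_tv below_c pi_x eps_lt j_gt0 free_ge tv_le.
have no_beyond : #|[set l | (j < tv l)%N]| = 0%N.
  by apply/eqP; rewrite cards_eq0; apply/eqP/setP => l; rewrite !inE ltnNge tv_le.
rewrite /level_load no_beyond add0n.
apply: le_trans (_ : #|free (st_pi s)|%:R <= _).
  by rewrite ler_nat subset_leq_card //; apply/subsetP => l; rewrite !inE => /andP[].
apply: le_trans (card_free_le_certificate fsym pi_x Q_cert eps_gt0 eps_le eps_lt) _.
rewrite ler_wpM2l ?mulr_ge0 ?L_ge0 ?ler_nat ?subset_leq_card //.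
apply/subsetP => l; rewrite !inE => /andP[lQ /eqP free_l]; rewrite lQ /=.
have tv_l := free_ge l free_l.
apply: le_lt_trans (below_c l free_l (leq_trans j_gt0 tv_l)).
by rewrite theta_tv ler_pM2r // ler_nat.
Qed.

Lemma cost_inv_next s tv : cost_inv s tv -> eps < bias R (restrict f (st_pi s)) ->
  exists i, iprr_next f c eps beta pick x s = invest c beta x s i /\
            cost_inv (invest c beta x s i) (tv_incr tv i).
Proof.
move=> [inv load_le] eps_lt.
have [i [free_i min_i _ next_i inv']] := iprr_inv_next fsym beta_gt0 pickP inv eps_lt.
exists i; split=> //; split=> // j j_gt0 beyond.
apply: le_trans (_ : (level_load s tv j)%:R <= _); first by rewrite ler_nat level_load_invest.
have [/existsP[l l_beyond]|] := boolP [exists l, (j < tv l)%N].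
  by apply: load_le => //; exists l.
rewrite negb_exists => /forallP none_beyond.
have tv_le l : (tv l <= j)%N by rewrite leqNgt none_beyond.
have tv_i : tv i = j.
  case: beyond => l; rewrite /tv_incr; have := tv_le l.
  by case: eqP => [->|_] /=; lia.
apply: level_load_le_expensive => // l free_l.
by rewrite -tv_i min_i.
Qed.

Lemma cost_inv_run k s tv : cost_inv s tv ->
  exists tv', cost_inv (iprr_run f c eps beta pick k x s) tv'.
Proof.
elim: k s tv => [|k IH] s tv inv; first by exists tv.
have [hs|eps_lt] := leP (bias R (restrict f (st_pi s))) eps.
  by rewrite iprr_run_halted //; exists tv.
have [i [next_i inv']] := cost_inv_next inv eps_lt.
by rewrite /= next_i; apply: IH inv'.
Qed.

Lemma layer_le_expensive s tv j : cost_inv s tv -> (0 < j)%N ->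
  #|[set i | (j < tv i)%N]|%:R <= 12 * ln (1/eps) * (expensive j)%:R.
Proof.
move=> [_ load_le] j_gt0.
have [/existsP[l l_beyond]|] := boolP [exists l, (j < tv l)%N].
  by apply: le_trans (load_le j j_gt0 (ex_intro _ l l_beyond)); rewrite ler_nat leq_addr.
rewrite negb_exists => /forallP none_beyond.
rewrite (_ : #|_| = 0%N) ?mulr_ge0 ?L_ge0 //.
by apply/eqP; rewrite cards_eq0; apply/eqP/setP => l; rewrite !inE (negbTE (none_beyond l)).
Qed.

Lemma sum_expensive_le T :
  beta * \sum_(j < T) (expensive j.+1)%:R <= \sum_(i in Q) c i.
Proof.
under eq_bigr do rewrite /expensive natr_card_sum.
rewrite exchange_big mulr_sumr [leRHS]big_mkcond /=; apply: ler_sum => i _.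
rewrite mulr_sumr; under eq_bigr do rewrite inE.
case: (i \in Q) => /=; last by rewrite big1 // => j _; rewrite mulr0.
exact: sum_threshold_le.
Qed.

Lemma cost_le s tv : cost_inv s tv ->
  iprr_cost s <= beta * n%:R + (\sum_(i in Q) c i) * (12 * ln (1/eps)).
Proof.
move=> inv; have [[theta_tv _ _] _] := inv.
have -> : iprr_cost s = beta * (\sum_i tv i)%N%:R.
  by rewrite /iprr_cost natr_sum mulr_sumr; apply: eq_bigr => i _; rewrite theta_tv mulrC.
rewrite (@sum_layers _ tv (\sum_i tv i).+1) => [|i]; last first.
  by apply: leqW; rewrite (bigD1 i) //= leq_addr.
rewrite big_ord_recl natrD mulrDr lerD //.
  by rewrite ler_wpM2l ?(ltW beta_gt0) // ler_nat -[leqRHS](card_ord n) max_card.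
rewrite natr_sum mulr_sumr.
apply: le_trans (_ : \sum_(j < _) beta * (expensive j.+1)%:R * (12 * ln (1/eps)) <= _).
  apply: ler_sum => j _; rewrite -mulrA ler_wpM2l ?(ltW beta_gt0) // mulrC.
  exact: (layer_le_expensive inv (ltn0Sn j)).
by rewrite -big_distrl /= -mulr_sumr ler_wpM2r ?sum_expensive_le ?mulr_ge0 ?L_ge0.
Qed.

End Cost.

Lemma exists_investment_bound (R : realType) n (c : 'I_n -> R) (beta : R) :
  (forall i, 0 <= c i) -> 0 < beta -> exists M : nat, forall i, c i < M%:R * beta.
Proof.
move=> c_ge0 beta_gt0; set S := \sum_i c i / beta.
have S_ge0 : 0 <= S by apply: sumr_ge0 => i _; rewrite divr_ge0 ?c_ge0 ?ltW.
exists (Num.Def.archi_bound S) => i; rewrite -ltr_pdivrMr //.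
apply: le_lt_trans (archi_boundP S_ge0).
by rewrite /S (bigD1 i) //= lerDl; apply: sumr_ge0 => j _; rewrite divr_ge0 ?c_ge0 ?ltW.
Qed.

Section Analysis.
Variables (R : realType) (n : nat) (f : cube n -> bool) (c : 'I_n -> R)
  (eps beta : R) (pick : selector R n).
Hypotheses (fsym : symmetric_fn f) (c_ge0 : forall i, 0 <= c i) (eps_gt0 : 0 < eps)
  (eps_le : eps <= 1/2) (beta_gt0 : 0 < beta) (pickP : pick_ok f eps pick).

Let run k x := iprr_run f c eps beta pick k x (init_state R n).

Lemma iprr_run_init_halts M k x : (forall i, c i < M%:R * beta) -> (n * M <= k)%N ->
  halted f eps (run k x).
Proof.
move=> c_lt_M nM_le.
apply: (iprr_run_halts fsym c_ge0 beta_gt0 pickP c_lt_M (iprr_inv_init c beta x)).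
apply: leq_trans nM_le; apply: (@leq_trans (\sum_(i < n) M)).
  by apply: leq_sum => i _; rewrite ffunE subn0.
by rewrite sum_nat_const card_ord.
Qed.

Lemma prob_iprr_error k : (forall x, halted f eps (run k x)) ->
  prob R (fun x => iprr_output f (run k x) != f x) <= eps.
Proof.
move=> halts; rewrite probE ler_pdivrMr ?cube_size_gt0 // natr_card_sum.
have theta0 i : 0 <= st_theta (init_state R n) i by rewrite ffunE.
apply: le_trans (sum_run_error c fsym eps_gt0 beta_gt0 pickP k theta0).
apply: ler_sum => z _; rewrite /run_error (_ : fill _ z = z) ?inE ?halts //.
by apply/ffunP => i; rewrite !ffunE.
Qed.

Lemma avg_iprr_cost_le k (t : dtree n) : (forall x, dt_eval t x = f x) ->
  avg (fun x => iprr_cost (run k x)) <= beta * n%:R + avg (dt_cost c t) * (12 * ln (1/eps)).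
Proof.
move=> t_eval.
have cost_x x : iprr_cost (run k x) <= beta * n%:R + dt_cost c t x * (12 * ln (1/eps)).
  have [Q [cost_Q cert_Q]] := dtree_certificate c_ge0 t x.
  have Q_cert (y : cube n) : (forall i, i \in Q -> y i = x i) -> f y = f x.
    by move=> agree; rewrite -!t_eval cert_Q.
  have [tv inv] : exists tv, cost_inv c eps beta x Q (run k x) tv.
    apply: (cost_inv_run fsym eps_gt0 eps_le beta_gt0 pickP Q_cert).
    by split=> [|j _ [i]]; [exact: iprr_inv_init | rewrite ltn0].
  apply: le_trans (cost_le c_ge0 eps_gt0 eps_le beta_gt0 inv) _.
  rewrite lerD2l ler_wpM2r // mulr_ge0 //; apply: ln_inv_ge0 => //.
  by apply: le_trans eps_le _; rewrite ler_pdivrMr // mul1r ler1n.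
have N_gt0 := cube_size_gt0 R n; set K := 12 * ln (1/eps) in cost_x *.
rewrite /avg ler_pdivrMr //; apply: le_trans (ler_sum _ (fun x _ => cost_x x)) _.
rewrite big_split /= sumr_const card_cube -big_distrl /= -(mulr_natr (beta * n%:R)).
by rewrite mulrDl [X in _ <= _ + X]mulrAC divfK ?lt0r_neq0.
Qed.

End Analysis.

Theorem mainTheorem6 :
  exists C : nat,
  forall (R : realType) (n : nat) (f : cube n -> bool) (c : 'I_n -> R)
         (eps beta : R) (pick : selector R n),
    symmetric_fn f ->
    (forall i, 0 <= c i) ->
    0 < eps -> eps <= 1 / 2 -> 0 < beta ->
    pick_ok f eps pick ->
    exists F : cube n -> state R n,
      (forall x, iprr_reach f c eps beta pick x (init_state R n) (F x) /\ halted f eps (F x)) /\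
      prob R (fun x => iprr_output f (F x) != f x) <= eps /\
      avg (fun x => iprr_cost (F x)) <=
        beta * n%:R + opt_avg_0 f c * (C%:R * ln (1 / eps)).
Proof.
exists 12%N => R n f c eps beta pick fsym c_ge0 eps_gt0 eps_le beta_gt0 pickP.
have [M c_lt_M] := exists_investment_bound c_ge0 beta_gt0.
pose F x := iprr_run f c eps beta pick (n * M) x (init_state R n).
have halts x : halted f eps (F x).
  exact: (iprr_run_init_halts fsym c_ge0 beta_gt0 pickP x c_lt_M (leqnn _)).
exists F; split; [|split].
- move=> x; split; last exact: halts.
  exact: (iprr_run_reach fsym beta_gt0 pickP _ (iprr_inv_init c beta x)).
- exact: (prob_iprr_error fsym eps_gt0 beta_gt0 pickP halts).
apply: le_opt_avg_0 => [|t t_eval]; first by rewrite mulr_gt0 // ln_gt0 // ltr_pdivlMr //; lra.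
exact: (avg_iprr_cost_le fsym c_ge0 eps_gt0 eps_le beta_gt0 pickP _ t_eval).
Qed.
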